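(* In the MAD-HTLC game described in the context, consider the last round, i.e. a subgame $G(T,s)$ for either $s\in\{\mathrm{red},\mathrm{irred}\}$. If $tx^{\mathrm{dep}}_{\mathcal{A}}$ and at least one of $tx^{\mathrm{dep}}_{\mathcal{B}}$ or $tx^{\mathrm{dc}}_{\mathcal{B}}$ have been published, then the miners' best-response strategy is not to include any of $\mathcal{A}$'s or $\mathcal{B}$'s transactions in this round.
   Context: Blockchain model: $n$ miners; miner $i$ has mining power $\lambda_i>0$, $\sum_i\lambda_i=1$. In each round exactly one miner is chosen, miner $i$ with probability $\lambda_i$, and creates a block containing one transaction of her choice, receiving its fee. An unrelated transaction offering the base fee $f$ is always available. Publishing a transaction reveals its contents (in particular preimages) to everyone. A contract can be redeemed by at most one confirmed transaction. All parties are rational and non-myopic, with utility the expected tokens owned at the end of the game. MAD-HTLC: preimages $pre_a,pre_b$ with digests $dig_a=H(pre_a)$, $dig_b=H(pre_b)$, chosen by $\mathcal{B}$; only $\mathcal{B}$ knows $pre_b$; $\mathcal{A}$ may know $pre_a$. Contracts initiated in block $b_j$ with timeout $T$: MH-Dep ($v^{\mathrm{dep}}$ tokens), redeemable via dep-A (signature of $\mathcal{A}$ and $pre_a$; any block), dep-B (signature of $\mathcal{B}$ and $pre_b$; only at least $T$ blocks after initiation), dep-M (both $pre_a,pre_b$; any block); MH-Col ($v^{\mathrm{col}}$ tokens), redeemable only at least $T$ blocks after initiation via col-B (signature of $\mathcal{B}$) or col-M (both $pre_a,pre_b$). Game: $T$ rounds creating $b_{j+1},\dots,b_{j+T}$;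 in each round $\mathcal{A},\mathcal{B}$ alternately publish transactions, then a random miner creates the block. Transactions: $tx^{\mathrm{dep}}_{\mathcal{A}}$ (MH-Dep via dep-A, fee $f<f^{\mathrm{dep}}_{\mathcal{A}}<v^{\mathrm{dep}}$); $tx^{\mathrm{dep}}_{\mathcal{B}}$ (MH-Dep via dep-B, fee $f<f^{\mathrm{dep}}_{\mathcal{B}}<v^{\mathrm{dep}}$); $tx^{\mathrm{col}}_{\mathcal{B}}$ (MH-Col via col-B, fee $f<f^{\mathrm{col}}_{\mathcal{B}}<v^{\mathrm{col}}$); $tx^{\mathrm{dc}}_{\mathcal{B}}$ (both, fee $f<f^{\mathrm{dc}}_{\mathcal{B}}<v^{\mathrm{dep}}+v^{\mathrm{col}}$). A miner may include an unrelated transaction (fee $f$), any currently valid published transaction, or, if both preimages were revealed by published transactions, her own transaction redeeming MH-Dep via dep-M (reward $v^{\mathrm{dep}}$, while MH-Dep is unredeemed), MH-Col via col-M (reward $v^{\mathrm{col}}$, last round only), or both (reward $v^{\mathrm{dep}}+v^{\mathrm{col}}$, last round, MH-Dep unredeemed). $G(k,s)$ denotes the subgame just before round $k\in[1,T]$ with MH-Dep redeemable ($s=\mathrm{red}$) or already redeemed ($s=\mathrm{irred}$). *)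

From Stdlib Require Import Reals Lra.
Open Scope R_scope.

Inductive tx : Type := txA_dep | txB_dep | txB_col | txB_dc.

(** State of MH-Dep at the start of the round: G(k, red) / G(k, irred). *)
Inductive dep_state : Type := red | irred.

Inductive action : Type :=
  | Unrelated
  | Include (t : tx)
  | OwnDepM              (* own tx redeeming MH-Dep via dep-M *)
  | OwnColM              (* own tx redeeming MH-Col via col-M *)
  | OwnBoth.             (* own tx redeeming both via dep-M and col-M *)

Record params : Type := Params {
  f : R; fAdep : R; fBdep : R; fBcol : R; fBdc : R; vdep : R; vcol : R }.

Definition params_ok (p : params) : Prop :=
  f p < fAdep p < vdep p /\ f p < fBdep p < vdep p /\
  f p < fBcol p < vcol p /\ f p < fBdc p < vdep p + vcol p.

(** Preimages revealed by published transactions: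
    dep-A reveals pre_a; dep-B and dc (which uses dep-B) reveal pre_b. *)
Definition pre_a_revealed (pub : tx -> bool) : bool := pub txA_dep.
Definition pre_b_revealed (pub : tx -> bool) : bool := pub txB_dep || pub txB_dc.
Definition both_revealed (pub : tx -> bool) : bool :=
  pre_a_revealed pub && pre_b_revealed pub.

(** MH-Dep unredeemed? *)
Definition dep_open (s : dep_state) : bool :=
  match s with red => true | irred => false end.

(** Validity of an action in round k (creating block b_{j+k}), with timeout T.
    MH-Col is never redeemed before round T (it is redeemable only from
    block b_{j+T} on), so within the game it is unredeemed at every round. *)
Definition valid (T k : nat) (s : dep_state) (pub : tx -> bool) (a : action) : bool :=
  match a with
  | Unrelated => true
  | Include txA_dep => pub txA_dep && dep_open s
  | Include txB_dep => pub txB_dep && dep_open s && Nat.leb T k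
  | Include txB_col => pub txB_col && Nat.leb T k
  | Include txB_dc  => pub txB_dc && dep_open s && Nat.leb T k
  | OwnDepM => both_revealed pub && dep_open s
  | OwnColM => both_revealed pub && Nat.eqb k T
  | OwnBoth => both_revealed pub && dep_open s && Nat.eqb k T
  end.

Definition reward (p : params) (a : action) : R :=
  match a with
  | Unrelated => f p
  | Include txA_dep => fAdep p
  | Include txB_dep => fBdep p
  | Include txB_col => fBcol p
  | Include txB_dc  => fBdc p
  | OwnDepM => vdep p
  | OwnColM => vcol p
  | OwnBoth => vdep p + vcol p
  end.

(** In the last round (k = T) the game ends after the block, so the miner's
    utility (expected tokens at the end) from her choice is exactly the reward
    of her block; a best response is a valid action maximizing it. *)
Definition last_round_best_response (p : params) (T : nat) (s : dep_state)
    (pub : tx -> bool) (a : action) : Prop :=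
  valid T T s pub a = true /\
  forall a', valid T T s pub a' = true -> reward p a' <= reward p a.

Definition includes_AB_tx (a : action) : Prop :=
  match a with Include _ => True | _ => False end.

(** In the last round, once [pre_a] and [pre_b] are both public, the miner
    can redeem herself whatever contract an [A]/[B] transaction would redeem,
    and each such transaction offers a fee strictly below the value of its
    contract.  So every valid [A]/[B] transaction is strictly dominated by a
    valid own redemption, and no best response includes one.  A best response
    exists because there are finitely many actions and [Unrelated] is always
    valid. *)

From Stdlib Require Import Reals Lra List.
Import ListNotations.

Lemma exists_max_above {A : Type} (P : A -> bool) (g : A -> R) (l : list A)
    (x0 : A) :
  P x0 = true ->
  exists a, P a = true /\ g x0 <= g a /\
    forall a', In a' l -> P a' = true -> g a' <= g a.
Proof.
  revert x0; induction l as [|y l IH]; intros x0 Hx0.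
  - exists x0; split; [exact Hx0 | split; [lra | intros a' []]].
  - destruct (P y) eqn:Hy; [destruct (Rle_dec (g x0) (g y)) as [Hxy|Hxy] |].
    + destruct (IH y Hy) as (a & Ha & Hya & Hmax).
      exists a; split; [exact Ha | split; [lra |]].
      intros a' [<- | Hin] Ha'; [lra | auto].
    + destruct (IH x0 Hx0) as (a & Ha & Hxa & Hmax).
      exists a; split; [exact Ha | split; [lra |]].
      intros a' [<- | Hin] Ha'; [lra | auto].
    + destruct (IH x0 Hx0) as (a & Ha & Hxa & Hmax).
      exists a; split; [exact Ha | split; [lra |]].
      intros a' [<- | Hin] Ha'; [congruence | auto].
Qed.

Definition all_actions : list action :=
  [Unrelated; Include txA_dep; Include txB_dep; Include txB_col;
   Include txB_dc; OwnDepM; OwnColM; OwnBoth].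

Lemma in_all_actions (a : action) : In a all_actions.
Proof. destruct a as [|[]| | |]; simpl; tauto. Qed.

Lemma last_round_best_response_exists (p : params) (T : nat) (s : dep_state)
    (pub : tx -> bool) :
  exists a, last_round_best_response p T s pub a.
Proof.
  destruct (exists_max_above (valid T T s pub) (reward p) all_actions Unrelated
              eq_refl) as (a & Ha & _ & Hmax).
  exists a; split; [exact Ha |].
  intros a' Ha'; exact (Hmax a' (in_all_actions a') Ha').
Qed.

Definition own_redeem (t : tx) : action :=
  match t with
  | txA_dep | txB_dep => OwnDepM
  | txB_col => OwnColM
  | txB_dc => OwnBoth
  end.

Lemma reward_lt_own_redeem (p : params) (t : tx) :
  params_ok p -> reward p (Include t) < reward p (own_redeem t).
Proof. unfold params_ok; destruct t; simpl; lra. Qed.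

Lemma valid_own_redeem (T : nat) (s : dep_state) (pub : tx -> bool) (t : tx) :
  both_revealed pub = true -> valid T T s pub (Include t) = true ->
  valid T T s pub (own_redeem t) = true.
Proof.
  intros Hb Ht.
  destruct t, s; simpl in *; rewrite ?Hb, ?Nat.eqb_refl; try reflexivity;
    rewrite ?Bool.andb_false_r in Ht; discriminate.
Qed.

Lemma best_response_not_include (p : params) (T : nat) (s : dep_state)
    (pub : tx -> bool) (a : action) :
  params_ok p -> both_revealed pub = true ->
  last_round_best_response p T s pub a -> ~ includes_AB_tx a.
Proof.
  intros Hp Hb [Hv Hmax] Hinc.
  destruct a as [|t| | |]; try exact Hinc.
  pose proof (Hmax _ (valid_own_redeem T s pub t Hb Hv)).
  pose proof (reward_lt_own_redeem p t Hp).
  lra.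
Qed.

Lemma both_revealed_of_published (pub : tx -> bool) :
  pub txA_dep = true -> (pub txB_dep = true \/ pub txB_dc = true) ->
  both_revealed pub = true.
Proof.
  unfold both_revealed, pre_a_revealed, pre_b_revealed.
  intros -> [-> | ->]; [| rewrite Bool.orb_true_r]; reflexivity.
Qed.

Theorem lemma4 (p : params) (T : nat) (s : dep_state) (pub : tx -> bool) :
  params_ok p -> (1 <= T)%nat ->
  pub txA_dep = true -> (pub txB_dep = true \/ pub txB_dc = true) ->
  (exists a, last_round_best_response p T s pub a) /\
  (forall a, last_round_best_response p T s pub a -> ~ includes_AB_tx a).
Proof.
  intros Hp _ HA HB.
  split.
  - apply last_round_best_response_exists.
  - intros a.
    apply best_response_not_include;
      [exact Hp | exact (both_revealed_of_published pub HA HB)].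
Qed.
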